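(* Consider the closed-loop cycle–rider error system described in the context, and fix an index $n\in\{0,1,2,\dots\}$. Suppose that on the open interval $(t_n^{on},t_n^{off})$ the crank angle stays in the controlled region, i.e. $q(t)\in\mathcal{Q}_c$ for all $t\in(t_n^{on},t_n^{off})$, so that $z=[e_1,\ e_2]^T$ is a Filippov solution of $$\dot e_1=e_2-\alpha e_1,\qquad M\dot e_2=\chi-Ve_2+B_k^s\Omega^s\Big[k_1e_2+\big(k_2+k_3\|z\|+k_4\|z\|^2\big)\operatorname{sgn}(e_2)\Big],$$ where $s\in\{R,L\}$ is the leg with $q(t)\in\mathcal{Q}^s$. Assume the gain conditions $$\alpha>\tfrac12,\quad k_1>\frac{1}{2\varepsilon c_{\Omega1}},\quad k_2\ge\frac{c_1}{\varepsilon c_{\Omega1}},\quad k_3\ge\frac{c_2}{\varepsilon c_{\Omega1}},\quad k_4\ge\frac{c_3}{\varepsilon c_{\Omega1}}.$$ Then, with $\gamma_1:=\min\!\big(\alpha-\tfrac12,\ \varepsilon c_{\Omega1}k_1-\tfrac12\big)>0$, $\lambda_1:=\min(\tfrac12,\tfrac{c_m}{2})$ and $\lambda_2:=\max(\tfrac12,\tfrac{c_M}{2})$, $$\|z(t)\|\le\sqrt{\frac{\lambda_2}{\lambda_1}}\,\|z(t_n^{on})\|\,e^{-\frac{\gamma_1}{2\lambda_2}(t-t_n^{on})}\qquad\text{for all }t\in(t_n^{on},t_n^{off}).$$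
   Context: Model. The crank angle $q(t)\in\mathbb{R}$ of a stationary cycle with a two-legged rider obeys $$M\ddot q+V\dot q+G+\tau_d-\tau_b-P=\sum_{s\in\{R,L\}}B_k^s\,\Omega^s\,u^s,$$ where $\tau_b=-c\dot q$ with unknown constant $c>0$; $M$ (inertia), $V$ (centripetal/Coriolis), $G$ (gravity), $\tau_d$ (unknown time-varying disturbance), $P$ (passive viscoelastic joint effects), $B_k^s$ (Jacobian element relating knee torque of leg $s$ to crank torque, a known function of $q$) and $\Omega^s$ (uncertain function relating stimulation input to knee torque) are real-valued functions of the state and time, and $u^s$ is the stimulation input to the quadriceps of leg $s\in\{R,L\}$. Standing assumptions (known positive constants): $c_m\le M\le c_M$; $|V|\le c_V|\dot q|$; $|G|\le c_G$; $|\tau_d|\le c_d$; $|B_k^s|\le c_B$; $|P|\le c_{P1}+c_{P2}|\dot q|$; $c_{\Omega1}\le\Omega^s\le c_{\Omega2}$; and $\tfrac12\dot M-V=0$ along trajectories. Switching regions. Fix $\varepsilon>0$ with $\varepsilon<\max(-B_k)$. Define $\mathcal{Q}^s:=\{q: -B_k^s(q)>\varepsilon\}$ for $s\in\{R,L\}$, the controlled region $\mathcal{Q}_c:=\mathcal{Q}^R\cup\mathcal{Q}^L$ (with $\mathcal{Q}^R\cap\mathcal{Q}^L=\emptyset$) and the uncontrolled region $\mathcal{Q}_u$ as its complement. The input is $u^s=v$ if $q\in\mathcal{Q}^s$ and $u^s=0$ otherwise; in particular in $\mathcal{Q}_u$ no input acts. Assuming $q$ starts in $\mathcal{Q}_c$,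 the switching times $t_0^{on}<t_0^{off}<t_1^{on}<t_1^{off}<\cdots$ are the successive times at which $q$ enters $\mathcal{Q}_c$ ($t_n^{on}$) and enters $\mathcal{Q}_u$ ($t_n^{off}$); $t_0^{on}$ is the initial time. Errors and controller. Given a desired crank angle $q_d(t)$ with $\dot q_d,\ddot q_d$ bounded, and a constant $\alpha>0$, set $e_1:=q_d-q$, $e_2:=\dot e_1+\alpha e_1$, $z:=[e_1,\ e_2]^T$. Then $M\dot e_2=\chi-Ve_2-B_k^s\Omega^s v$ in $\mathcal{Q}^s$ and $M\dot e_2=\chi-Ve_2$ in $\mathcal{Q}_u$, where $\chi:=M(\ddot q_d+\alpha\dot e_1)+V(\dot q_d+\alpha e_1)+G+\tau_d-\tau_b-P$. It is assumed that there are known constants $c_1,c_2,c_3>0$ with $|\chi|\le c_1+c_2\|z\|+c_3\|z\|^2$. The control is $v:=-k_1e_2-(k_2+k_3\|z\|+k_4\|z\|^2)\operatorname{sgn}(e_2)$ with constants $k_1,k_2,k_3,k_4>0$; solutions are understood in the sense of Filippov. *)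

From Stdlib Require Import Reals Lra.
Open Scope R_scope.

Fixpoint rsum (n : nat) (g : nat -> R) : R :=
  match n with O => 0 | S k => rsum k g + g k end.

(* Lebesgue-null set: covered by countably many open intervals of
   arbitrarily small total length. *)
Definition negligible (N : R -> Prop) : Prop :=
  forall eps, 0 < eps -> exists a b : nat -> R,
    (forall x, N x -> exists k, a k < x < b k) /\
    (forall k, a k <= b k) /\
    (forall n, rsum n (fun k => b k - a k) <= eps).

Definition ae_on (I P : R -> Prop) : Prop :=
  exists N, negligible N /\ forall t, I t -> ~ N t -> P t.

(* Absolute continuity of f on [a,b] (finite families of non-overlapping
   subintervals, listed in increasing order). *)
Definition abs_cont_on (f : R -> R) (a b : R) : Prop :=
  forall eps, 0 < eps -> exists delta, 0 < delta /\
    forall (n : nat) (x y : nat -> R),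
      (forall i, (i < n)%nat -> a <= x i /\ x i <= y i /\ y i <= b) ->
      (forall i, (S i < n)%nat -> y i <= x (S i)) ->
      rsum n (fun i => y i - x i) < delta ->
      rsum n (fun i => Rabs (f (y i) - f (x i))) < eps.

(* Filippov set-valued map of sgn:  SGN x = {1} (x>0), {-1} (x<0), [-1,1] (x=0). *)
Definition SGN (x s : R) : Prop :=
  (0 < x /\ s = 1) \/ (x < 0 /\ s = -1) \/ (x = 0 /\ -1 <= s <= 1).

Definition znorm (a b : R) : R := sqrt (a ^ 2 + b ^ 2).

Definition Qreg (B : R -> R) (eps theta : R) : Prop := - B theta > eps.

(* z = [e1; e2] is a Filippov solution on [t0, t1) of the closed-loop error system
     e1' = e2 - alpha e1,
     M e2' = chi - V e2 + B_k^s Omega^s [k1 e2 + (k2 + k3 |z| + k4 |z|^2) sgn(e2)],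
   s the leg with q(t) in Q^s.  All of M, V, chi, Omega^s are the given functions
   evaluated along the trajectory (functions of time); B_k^s are functions of q. *)
Definition closed_loop_filippov_sol
    (alpha eps k1 k2 k3 k4 : R)
    (M V chi BR BL OmR OmL q e1 e2 : R -> R) (t0 t1 : R) : Prop :=
  (forall T, t0 <= T < t1 -> abs_cont_on e1 t0 T /\ abs_cont_on e2 t0 T) /\
  ae_on (fun t => t0 < t < t1) (fun t =>
    derivable_pt_lim e1 t (e2 t - alpha * e1 t) /\
    exists de2 sigma,
      derivable_pt_lim e2 t de2 /\ SGN (e2 t) sigma /\
      ((Qreg BR eps (q t) /\
        M t * de2 = chi t - V t * e2 t + BR (q t) * OmR t *
          (k1 * e2 t + (k2 + k3 * znorm (e1 t) (e2 t)
                         + k4 * (znorm (e1 t) (e2 t)) ^ 2) * sigma)) \/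
       (Qreg BL eps (q t) /\
        M t * de2 = chi t - V t * e2 t + BL (q t) * OmL t *
          (k1 * e2 t + (k2 + k3 * znorm (e1 t) (e2 t)
                         + k4 * (znorm (e1 t) (e2 t)) ^ 2) * sigma)))).

(* With V = 1/2 e1^2 + 1/2 M e2^2 and
   c = gamma1 / lambda2, the weighted function W(t) = exp (c t) V(t) is
   absolutely continuous and, at almost every time, has derivative
   exp (c t) (c V + dV) <= 0: the sign feedback dominates the bound on chi,
   the skew-symmetry 1/2 dM = V_cor cancels the Coriolis term, and the gain
   conditions give dV <= - gamma1 |z|^2 <= - c V.  Hence W(t) <= W(t0), and the
   sandwich lambda1 |z|^2 <= V <= lambda2 |z|^2 yields the claimed bound. *)

From Stdlib Require Import Reals Lra Lia List Classical.
Import ListNotations.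
Open Scope R_scope.

Lemma rsum_ext n f g : (forall i, (i < n)%nat -> f i = g i) -> rsum n f = rsum n g.
Proof.
  induction n as [|n IH]; simpl; intros H; [reflexivity|].
  rewrite IH by (intros; apply H; lia).
  rewrite H by lia; reflexivity.
Qed.

Lemma rsum_le n f g : (forall i, (i < n)%nat -> f i <= g i) -> rsum n f <= rsum n g.
Proof.
  induction n as [|n IH]; simpl; intros H; [lra|].
  assert (rsum n f <= rsum n g) by (apply IH; intros; apply H; lia).
  assert (f n <= g n) by (apply H; lia).
  lra.
Qed.

Lemma rsum_plus n f g : rsum n (fun i => f i + g i) = rsum n f + rsum n g.
Proof. induction n as [|n IH]; simpl; [lra|]. rewrite IH; lra. Qed.

Lemma rsum_scal n c f : rsum n (fun i => c * f i) = c * rsum n f.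
Proof. induction n as [|n IH]; simpl; [lra|]. rewrite IH; lra. Qed.

Lemma rsum_mono n m f : (n <= m)%nat -> (forall i, 0 <= f i) -> rsum n f <= rsum m f.
Proof. intros H Hf; induction H; simpl; [lra|]. specialize (Hf m); lra. Qed.

Lemma rsum_shift n f : rsum (S n) f = f O + rsum n (fun i => f (S i)).
Proof.
  induction n as [|n IH]; [simpl; lra|].
  change (rsum (S (S n)) f) with (rsum (S n) f + f (S n)).
  rewrite IH; simpl; lra.
Qed.

Lemma rsum_interleave m f g :
  rsum (2 * m) (fun k => if Nat.even k then f (Nat.div2 k) else g (Nat.div2 k))
  = rsum m f + rsum m g.
Proof.
  induction m as [|m IH]; [simpl; lra|].
  replace (2 * S m)%nat with (S (S (2 * m))) by lia.
  change (rsum (S (S (2 * m))) ?h) with (rsum (2 * m) h + h (2 * m)%nat + h (S (2 * m))).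
  rewrite IH; simpl rsum.
  replace (S (2 * m)) with (2 * m + 1)%nat by lia.
  rewrite Nat.even_odd, Nat.even_even.
  replace (2 * m + 1)%nat with (S (2 * m)) by lia.
  rewrite Nat.div2_succ_double, Nat.div2_double; lra.
Qed.

Lemma negligible_union N1 N2 :
  negligible N1 -> negligible N2 -> negligible (fun x => N1 x \/ N2 x).
Proof.
  intros H1 H2 eps He.
  destruct (H1 (eps / 2)) as [a1 [b1 [C1 [L1 S1]]]]; [lra|].
  destruct (H2 (eps / 2)) as [a2 [b2 [C2 [L2 S2]]]]; [lra|].
  exists (fun k => if Nat.even k then a1 (Nat.div2 k) else a2 (Nat.div2 k)).
  exists (fun k => if Nat.even k then b1 (Nat.div2 k) else b2 (Nat.div2 k)).
  split; [|split].
  - intros x [Hx|Hx].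
    + destruct (C1 x Hx) as [k Hk]. exists (2 * k)%nat.
      rewrite Nat.even_even, Nat.div2_double; exact Hk.
    + destruct (C2 x Hx) as [k Hk]. exists (S (2 * k)).
      replace (S (2 * k)) with (2 * k + 1)%nat by lia. rewrite Nat.even_odd.
      replace (2 * k + 1)%nat with (S (2 * k)) by lia.
      rewrite Nat.div2_succ_double; exact Hk.
  - intros k; destruct (Nat.even k); auto.
  - intros n.
    set (g := fun k => (if Nat.even k then b1 (Nat.div2 k) else b2 (Nat.div2 k))
                       - (if Nat.even k then a1 (Nat.div2 k) else a2 (Nat.div2 k))).
    assert (Hg : forall k, 0 <= g k).
    { intros k; unfold g; destruct (Nat.even k);
        [specialize (L1 (Nat.div2 k)) | specialize (L2 (Nat.div2 k))]; lra. }
    assert (E : rsum (2 * n) g = rsum n (fun k => b1 k - a1 k) + rsum n (fun k => b2 k - a2 k)).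
    { rewrite <- rsum_interleave. apply rsum_ext; intros i _; unfold g.
      destruct (Nat.even i); reflexivity. }
    apply Rle_trans with (rsum (2 * n) g); [apply rsum_mono; auto; lia|].
    specialize (S1 n); specialize (S2 n); lra.
Qed.

Lemma negligible_point y : negligible (fun x => x = y).
Proof.
  intros eps He.
  exists (fun k => match k with O => y - eps / 4 | _ => y end).
  exists (fun k => match k with O => y + eps / 4 | _ => y end).
  split; [|split].
  - intros x ->; exists O; lra.
  - intros [|k]; lra.
  - intros [|n]; [simpl; lra|].
    rewrite rsum_shift, (rsum_ext n _ (fun _ => 0)) by (intros; lra).
    assert (Z : forall m, rsum m (fun _ => 0) = 0) by (induction m; simpl; lra).
    rewrite Z; lra.
Qed.

Lemma ac_plus f g a b :
  abs_cont_on f a b -> abs_cont_on g a b -> abs_cont_on (fun t => f t + g t) a b.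
Proof.
  intros Hf Hg eps He.
  destruct (Hf (eps / 2)) as [d1 [Hd1 H1]]; [lra|].
  destruct (Hg (eps / 2)) as [d2 [Hd2 H2]]; [lra|].
  exists (Rmin d1 d2); split; [apply Rmin_glb_lt; auto|].
  intros n x y Hxy Ho Hs.
  pose proof (Rmin_l d1 d2); pose proof (Rmin_r d1 d2).
  specialize (H1 n x y Hxy Ho ltac:(lra)); specialize (H2 n x y Hxy Ho ltac:(lra)).
  eapply Rle_lt_trans.
  - apply (rsum_le n _ (fun i => Rabs (f (y i) - f (x i)) + Rabs (g (y i) - g (x i)))).
    intros i _.
    replace (f (y i) + g (y i) - (f (x i) + g (x i)))
      with ((f (y i) - f (x i)) + (g (y i) - g (x i))) by ring.
    apply Rabs_triang.
  - rewrite rsum_plus; lra.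
Qed.

Lemma absorb_constant L e : 0 <= L -> 0 < e -> L * (e / (L + 1)) < e.
Proof. intros HL He. apply (Rmult_lt_reg_r (L + 1)); [lra|]. field_simplify; lra. Qed.

Lemma ac_scal c f a b : abs_cont_on f a b -> abs_cont_on (fun t => c * f t) a b.
Proof.
  intros Hf eps He.
  pose proof (Rabs_pos c) as Hc.
  destruct (Hf (eps / (Rabs c + 1))) as [d [Hd H]]; [apply Rdiv_lt_0_compat; lra|].
  exists d; split; auto. intros n x y Hxy Ho Hs.
  specialize (H n x y Hxy Ho Hs).
  rewrite (rsum_ext n _ (fun i => Rabs c * Rabs (f (y i) - f (x i))))
    by (intros; rewrite <- Rabs_mult; f_equal; ring).
  rewrite rsum_scal.
  pose proof (absorb_constant (Rabs c) eps Hc He).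
  assert (Rabs c * rsum n (fun i => Rabs (f (y i) - f (x i)))
          <= Rabs c * (eps / (Rabs c + 1))) by (apply Rmult_le_compat_l; lra).
  lra.
Qed.

(* An absolutely continuous function is bounded: walking from [a] in steps
   of length [d / 2], each step changes [f] by less than 1. *)
Lemma ac_bounded f a b :
  a <= b -> abs_cont_on f a b -> exists B, 0 <= B /\ forall x, a <= x <= b -> Rabs (f x) <= B.
Proof.
  intros Hab Hf. destruct (Hf 1) as [d [Hd H]]; [lra|].
  assert (Steps : forall m : nat, forall x, a <= x <= b -> x <= a + INR m * (d / 2) ->
                    Rabs (f x - f a) <= INR m).
  { induction m as [|m IH]; intros x Hx Hm.
    - simpl in Hm. replace x with a by lra. rewrite Rminus_diag, Rabs_R0; simpl; lra.
    - rewrite S_INR in Hm |- *. pose proof (pos_INR m).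
      destruct (Rle_dec x (a + INR m * (d / 2))) as [Hl|Hl]; [specialize (IH x Hx Hl); lra|].
      set (y := a + INR m * (d / 2)) in *.
      assert (a <= y) by (unfold y; pose proof (Rmult_le_pos (INR m) (d / 2)); lra).
      specialize (IH y ltac:(unfold y in *; lra) ltac:(lra)).
      specialize (H 1%nat (fun _ => y) (fun _ => x) ltac:(intros; unfold y in *; lra)
                    ltac:(intros; lia) ltac:(simpl; unfold y in *; lra)).
      simpl in H.
      replace (f x - f a) with ((f x - f y) + (f y - f a)) by ring.
      eapply Rle_trans; [apply Rabs_triang | lra]. }
  destruct (INR_archimed (d / 2) (b - a)) as [m Hm]; [lra|].
  exists (Rabs (f a) + INR m).
  split; [pose proof (Rabs_pos (f a)); pose proof (pos_INR m); lra|].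
  intros x Hx. specialize (Steps m x Hx ltac:(lra)).
  replace (f x) with ((f x - f a) + f a) by ring.
  eapply Rle_trans; [apply Rabs_triang | lra].
Qed.

(* Products: [f g' - f g = f (g' - g) + g (f' - f)] with both factors bounded. *)
Lemma ac_mult f g a b :
  a <= b -> abs_cont_on f a b -> abs_cont_on g a b -> abs_cont_on (fun t => f t * g t) a b.
Proof.
  intros Hab Hf Hg.
  destruct (ac_bounded f a b Hab Hf) as [Bf [HBf Bfb]].
  destruct (ac_bounded g a b Hab Hg) as [Bg [HBg Bgb]].
  intros eps He.
  destruct (Hf (eps / 2 / (Bg + 1))) as [d1 [Hd1 H1]]; [apply Rdiv_lt_0_compat; lra|].
  destruct (Hg (eps / 2 / (Bf + 1))) as [d2 [Hd2 H2]]; [apply Rdiv_lt_0_compat; lra|].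
  exists (Rmin d1 d2); split; [apply Rmin_glb_lt; auto|].
  intros n x y Hxy Ho Hs.
  pose proof (Rmin_l d1 d2); pose proof (Rmin_r d1 d2).
  specialize (H1 n x y Hxy Ho ltac:(lra)); specialize (H2 n x y Hxy Ho ltac:(lra)).
  eapply Rle_lt_trans.
  - apply (rsum_le n _ (fun i => Bf * Rabs (g (y i) - g (x i)) + Bg * Rabs (f (y i) - f (x i)))).
    intros i Hi. destruct (Hxy i Hi) as [X1 [X2 X3]].
    replace (f (y i) * g (y i) - f (x i) * g (x i))
      with (f (y i) * (g (y i) - g (x i)) + g (x i) * (f (y i) - f (x i))) by ring.
    eapply Rle_trans; [apply Rabs_triang|]. rewrite !Rabs_mult.
    apply Rplus_le_compat; apply Rmult_le_compat_r; try apply Rabs_pos;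
      [apply Bfb | apply Bgb]; lra.
  - rewrite rsum_plus, !rsum_scal.
    pose proof (absorb_constant Bf (eps / 2) HBf ltac:(lra)).
    pose proof (absorb_constant Bg (eps / 2) HBg ltac:(lra)).
    assert (Bf * rsum n (fun i => Rabs (g (y i) - g (x i))) <= Bf * (eps / 2 / (Bf + 1)))
      by (apply Rmult_le_compat_l; lra).
    assert (Bg * rsum n (fun i => Rabs (f (y i) - f (x i))) <= Bg * (eps / 2 / (Bg + 1)))
      by (apply Rmult_le_compat_l; lra).
    lra.
Qed.

(* Lipschitz functions are absolutely continuous (take [delta = eps / (L + 1)]). *)
Lemma ac_lipschitz f a b L :
  0 <= L ->
  (forall x y, a <= x <= b -> a <= y <= b -> Rabs (f y - f x) <= L * Rabs (y - x)) ->
  abs_cont_on f a b.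
Proof.
  intros HL Hl eps He. exists (eps / (L + 1)); split; [apply Rdiv_lt_0_compat; lra|].
  intros n x y Hxy Ho Hs.
  eapply Rle_lt_trans.
  - apply (rsum_le n _ (fun i => L * (y i - x i))).
    intros i Hi. destruct (Hxy i Hi) as [X1 [X2 X3]].
    rewrite <- (Rabs_right (y i - x i)) by lra. apply Hl; lra.
  - rewrite rsum_scal. pose proof (absorb_constant L eps HL He).
    assert (L * rsum n (fun i => y i - x i) <= L * (eps / (L + 1)))
      by (apply Rmult_le_compat_l; lra).
    lra.
Qed.

Lemma derivable_pt_lim_exp_lin c x :
  derivable_pt_lim (fun t => exp (c * t)) x (c * exp (c * x)).
Proof.
  assert (D : derivable_pt_lim (mult_real_fct c id) x (c * 1))
    by (apply derivable_pt_lim_scal, derivable_pt_lim_id).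
  rewrite Rmult_1_r in D.
  change (derivable_pt_lim (comp exp (mult_real_fct c id)) x (c * exp (c * x))).
  rewrite Rmult_comm.
  apply derivable_pt_lim_comp; [exact D | apply derivable_pt_lim_exp].
Qed.

(* [t |-> exp (c t)] is Lipschitz on [[a, b]] by the mean value theorem. *)
Lemma ac_exp_lin c a b : abs_cont_on (fun t => exp (c * t)) a b.
Proof.
  set (K := exp (Rabs c * (Rabs a + Rabs b))).
  assert (HK : 0 <= K) by (left; apply exp_pos).
  apply (ac_lipschitz _ _ _ (Rabs c * K)); [apply Rmult_le_pos; auto; apply Rabs_pos|].
  assert (Lip : forall x y, a <= x <= b -> a <= y <= b -> x < y ->
            Rabs (exp (c * y) - exp (c * x)) <= Rabs c * K * Rabs (y - x)).
  { intros x y Hx Hy Hxy.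
    destruct (MVT_cor2 (fun t => exp (c * t)) (fun t => c * exp (c * t)) x y Hxy)
      as [z [Hz1 Hz2]]; [intros; apply derivable_pt_lim_exp_lin|].
    rewrite Hz1, !Rabs_mult, (Rabs_right (exp (c * z))) by (left; apply exp_pos).
    apply Rmult_le_compat_r; [apply Rabs_pos|].
    apply Rmult_le_compat_l; [apply Rabs_pos|].
    assert (c * z <= Rabs c * (Rabs a + Rabs b)).
    { eapply Rle_trans; [apply Rle_abs|]. rewrite Rabs_mult.
      apply Rmult_le_compat_l; [apply Rabs_pos|].
      unfold Rabs; repeat destruct Rcase_abs; lra. }
    unfold K. destruct H as [H|H]; [left; apply exp_increasing; auto | rewrite H; lra]. }
  intros x y Hx Hy. destruct (Rtotal_order x y) as [Hl|[He|Hg]].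
  - apply Lip; auto.
  - subst. rewrite !Rminus_diag, Rabs_R0; lra.
  - rewrite Rabs_minus_sym, (Rabs_minus_sym y). apply Lip; auto.
Qed.

(** Tagged partitions and Cousin's lemma.  [fchain G a l b] says that the list
    [l] of tagged intervals [(u, x, v)], with [u <= x <= v] and [G u x v], tiles
    [[a, b]] from left to right. *)

Inductive fchain (G : R -> R -> R -> Prop) : R -> list (R * R * R) -> R -> Prop :=
| fchain_nil a : fchain G a nil a
| fchain_cons u x v l b :
    u <= x <= v -> G u x v -> fchain G v l b -> fchain G u ((u, x, v) :: l) b.

Lemma fchain_snoc G a l y x v :
  fchain G a l y -> y <= x <= v -> G y x v -> fchain G a (l ++ [(y, x, v)]) v.
Proof.
  induction 1; intros; simpl; constructor; auto.
  constructor.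
Qed.

(* Proof: the supremum of the reachable right endpoints is [b]
   and is itself reachable. *)
Lemma cousin (G : R -> R -> R -> Prop) a b :
  a <= b ->
  (forall x, a <= x <= b ->
     exists d, 0 < d /\ forall u v, u <= x <= v -> v - u < d -> G u x v) ->
  exists l, fchain G a l b.
Proof.
  intros Hab Hg.
  set (E := fun y => a <= y <= b /\ exists l, fchain G a l y).
  assert (Eb : bound E) by (exists b; intros y [Hy _]; lra).
  assert (Ea : exists y, E y) by (exists a; split; [lra | exists nil; constructor]).
  destruct (completeness E Eb Ea) as [s [Hub Hlub]].
  assert (Has : a <= s) by (apply Hub; split; [lra | exists nil; constructor]).
  assert (Hsb : s <= b) by (apply Hlub; intros y [Hy _]; lra).
  destruct (Hg s ltac:(lra)) as [d [Hd Hgd]].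
  assert (Near : exists y, E y /\ s - d / 2 < y).
  { apply NNPP; intros Hn.
    assert (s <= s - d / 2); [|lra].
    apply Hlub; intros y Ey.
    destruct (Rle_dec y (s - d / 2)) as [?|Hc]; auto.
    exfalso; apply Hn; exists y; split; auto; lra. }
  destruct Near as [y [[Hy1 [l Hl]] Hy2]].
  assert (Hys : y <= s) by (apply Hub; split; auto; exists l; auto).
  set (v := Rmin (s + d / 2) b).
  assert (Hv1 : s <= v) by (unfold v; apply Rmin_glb; lra).
  assert (Hv2 : v <= s + d / 2) by apply Rmin_l.
  assert (Hv3 : v <= b) by apply Rmin_r.
  assert (Extend : forall w, s <= w <= v -> fchain G a (l ++ [(y, s, w)]) w)
    by (intros w Hw; apply fchain_snoc; auto; [lra | apply Hgd; lra]).
  assert (Hvs : v <= s) by (apply Hub; split; [lra | eexists; apply Extend; lra]).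
  assert (s = b).
  { unfold v in *. destruct (Rle_dec (s + d / 2) b).
    - rewrite Rmin_left in Hvs; lra.
    - rewrite Rmin_right in Hvs; lra. }
  subst s. exists (l ++ [(y, b, v)]).
  replace b with v at 2 by lra. apply Extend; lra.
Qed.

Inductive ordered : R -> list (R * R) -> R -> Prop :=
| ordered_nil a b : a <= b -> ordered a nil b
| ordered_cons a p q l b : a <= p -> p <= q -> ordered q l b -> ordered a ((p, q) :: l) b.

Definition lsum (g : R * R -> R) (L : list (R * R)) : R :=
  fold_right (fun pq s => g pq + s) 0 L.

Definition sumlen (L : list (R * R)) : R := lsum (fun pq => snd pq - fst pq) L.

Definition sumabs (f : R -> R) (L : list (R * R)) : R :=
  lsum (fun pq => Rabs (f (snd pq) - f (fst pq))) L.

Lemma ordered_le a l b : ordered a l b -> a <= b.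
Proof. induction 1; lra. Qed.

Lemma ordered_weak a a' l b : ordered a l b -> a' <= a -> ordered a' l b.
Proof. intros H; inversion H; subst; intros; constructor; auto; lra. Qed.

Lemma ordered_filter (P : R * R -> bool) a L b : ordered a L b -> ordered a (filter P L) b.
Proof.
  induction 1 as [|a p q l b Hap Hpq Hl IH]; simpl; [constructor; auto|].
  destruct (P (p, q)); [constructor; auto | apply (ordered_weak q); auto; lra].
Qed.

Lemma lsum_filter_split (P : R * R -> bool) g L :
  lsum g L = lsum g (filter P L) + lsum g (filter (fun pq => negb (P pq)) L).
Proof.
  induction L as [|pq L IH]; simpl; [lra|].
  destruct (P pq); simpl; rewrite IH; lra.
Qed.

Lemma ordered_nth a L b d : ordered a L b -> forall i, (i < length L)%nat ->
  a <= fst (nth i L d) /\ fst (nth i L d) <= snd (nth i L d) /\ snd (nth i L d) <= b.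
Proof.
  induction 1 as [|a p q l b Hap Hpq Hl IH]; simpl; intros i Hi; [lia|].
  pose proof (ordered_le _ _ _ Hl).
  destruct i; simpl; [lra|]. destruct (IH i ltac:(lia)); lra.
Qed.

Lemma ordered_nth_succ a L b d : ordered a L b -> forall i, (S i < length L)%nat ->
  snd (nth i L d) <= fst (nth (S i) L d).
Proof.
  induction 1 as [|a p q l b Hap Hpq Hl IH]; simpl; intros i Hi; [lia|].
  destruct i; simpl; [|apply IH; lia].
  destruct (ordered_nth _ _ _ d Hl 0%nat ltac:(lia)); simpl in *; lra.
Qed.

Lemma rsum_nth (g : R * R -> R) L d :
  rsum (length L) (fun i => g (nth i L d)) = lsum g L.
Proof.
  induction L as [|pq L IH]; [reflexivity|].
  change (length (pq :: L)) with (S (length L)).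
  rewrite rsum_shift; simpl; rewrite IH; reflexivity.
Qed.

Lemma abs_cont_ordered f a b eps d L :
  (forall (n : nat) (x y : nat -> R),
      (forall i, (i < n)%nat -> a <= x i /\ x i <= y i /\ y i <= b) ->
      (forall i, (S i < n)%nat -> y i <= x (S i)) ->
      rsum n (fun i => y i - x i) < d ->
      rsum n (fun i => Rabs (f (y i) - f (x i))) < eps) ->
  ordered a L b -> sumlen L < d -> sumabs f L < eps.
Proof.
  intros H Ho Hs.
  specialize (H (length L) (fun i => fst (nth i L (a, a))) (fun i => snd (nth i L (a, a)))
                (ordered_nth a L b (a, a) Ho) (ordered_nth_succ a L b (a, a) Ho)).
  unfold sumlen, sumabs; rewrite <- !(rsum_nth _ L (a, a)). apply H.
  unfold sumlen in Hs; rewrite <- (rsum_nth _ L (a, a)) in Hs. exact Hs.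
Qed.

Lemma sumlen_inside lo L hi A B :
  ordered lo L hi -> (forall pq, In pq L -> A <= fst pq /\ snd pq <= B) ->
  sumlen L <= Rmax 0 (B - Rmax lo A).
Proof.
  unfold sumlen, lsum.
  induction 1 as [|a p q l b Hap Hpq Hl IH]; intros Hin; simpl; [apply Rmax_l|].
  assert (IH' : fold_right (fun pq s => snd pq - fst pq + s) 0 l <= Rmax 0 (B - Rmax q A))
    by (apply IH; intros; apply Hin; right; auto).
  destruct (Hin (p, q) (or_introl eq_refl)) as [E1 E2]; simpl in *.
  unfold Rmax in *; repeat destruct Rle_dec; lra.
Qed.

Definition insideb (A B : R) (pq : R * R) : bool :=
  if Rle_dec A (fst pq) then if Rle_dec (snd pq) B then true else false else false.

(* Induction on [K], splitting off the intervals inside [[a' K, b' K]]. *)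
Lemma sumlen_covered (a' b' : nat -> R) K :
  (forall k, a' k <= b' k) -> forall lo L hi, ordered lo L hi ->
  (forall pq, In pq L -> exists k, (k < K)%nat /\ a' k <= fst pq /\ snd pq <= b' k) ->
  sumlen L <= rsum K (fun k => b' k - a' k).
Proof.
  intros Hab. induction K as [|K IH]; intros lo L hi Ho Hin.
  - destruct L as [|pq L]; [simpl; unfold sumlen; simpl; lra|].
    destruct (Hin pq (or_introl eq_refl)) as [k [Hk _]]; lia.
  - unfold sumlen; rewrite (lsum_filter_split (insideb (a' K) (b' K))); simpl.
    assert (Inside : sumlen (filter (insideb (a' K) (b' K)) L) <= b' K - a' K).
    { eapply Rle_trans.
      - apply (sumlen_inside lo _ hi (a' K) (b' K)); [apply ordered_filter; auto|].
        intros pq Hpq. apply filter_In in Hpq as [_ Hpq]. unfold insideb in Hpq.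
        destruct Rle_dec; [destruct Rle_dec|]; try discriminate; auto.
      - specialize (Hab K). unfold Rmax; repeat destruct Rle_dec; lra. }
    assert (Outside : sumlen (filter (fun pq => negb (insideb (a' K) (b' K) pq)) L)
                      <= rsum K (fun k => b' k - a' k)).
    { apply (IH lo _ hi); [apply ordered_filter; auto|].
      intros pq Hpq. apply filter_In in Hpq as [Hpq Hout].
      destruct (Hin pq Hpq) as [k [Hk [Hk1 Hk2]]]. exists k; split; auto.
      destruct (Nat.eq_dec k K); [|lia]. subst k. unfold insideb in Hout.
      destruct Rle_dec; [destruct Rle_dec|]; try discriminate; lra. }
    unfold sumlen in Inside, Outside; lra.
Qed.

(** Monotonicity: an absolutely continuous function whose derivative is
    nonpositive almost everywhere is nonincreasing. *)

Lemma nonpos_derivative_local f x d eps :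
  derivable_pt_lim f x d -> d <= 0 -> 0 < eps ->
  exists delta, 0 < delta /\
    forall u v, u <= x <= v -> v - u < delta -> f v - f u <= eps * (v - u).
Proof.
  intros Df Hd He. destruct (Df eps He) as [del Hdel].
  exists (pos del); split; [apply cond_pos|]. intros u v Huv Hvu.
  assert (Right : f v - f x <= eps * (v - x)).
  { destruct (Req_dec v x) as [->|Hne]; [lra|].
    specialize (Hdel (v - x) ltac:(lra) ltac:(rewrite Rabs_right; lra)).
    replace (x + (v - x)) with v in Hdel by ring.
    apply Rabs_def2 in Hdel as [H1 H2].
    assert ((f v - f x) / (v - x) * (v - x) = f v - f x) by (field; lra).
    assert ((f v - f x) / (v - x) * (v - x) <= eps * (v - x))
      by (apply Rmult_le_compat_r; lra).
    lra. }
  assert (Left : f x - f u <= eps * (x - u)).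
  { destruct (Req_dec u x) as [->|Hne]; [lra|].
    specialize (Hdel (u - x) ltac:(lra) ltac:(rewrite Rabs_left; lra)).
    replace (x + (u - x)) with u in Hdel by ring.
    apply Rabs_def2 in Hdel as [H1 H2].
    assert ((f u - f x) / (u - x) * (x - u) = - (f u - f x)) by (field; lra).
    assert ((f u - f x) / (u - x) * (x - u) <= eps * (x - u))
      by (apply Rmult_le_compat_r; lra).
    lra. }
  lra.
Qed.

(* Fineness condition used with Cousin's lemma: intervals tagged in the null
   set [N] lie inside a covering interval, the others have increments at most
   [eps] times their length. *)
Definition fine_tag (f : R -> R) (N : R -> Prop) (a' b' : nat -> R) (eps u x v : R) : Prop :=
  (N x -> exists k, a' k <= u /\ v <= b' k) /\ (~ N x -> f v - f u <= eps * (v - u)).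

Lemma fine_chain_increment f N a' b' eps lo l hi :
  0 <= eps -> fchain (fine_tag f N a' b' eps) lo l hi ->
  exists L K, ordered lo L hi /\
    (forall pq, In pq L -> exists k, (k < K)%nat /\ a' k <= fst pq /\ snd pq <= b' k) /\
    f hi - f lo <= eps * (hi - lo) + sumabs f L.
Proof.
  intros He. induction 1 as [a|u x v l b Huxv [Gnull Gok] Hl IH].
  - exists nil, O. split; [constructor; lra|]. split; [simpl; tauto|].
    unfold sumabs; simpl; lra.
  - destruct IH as [L [K [Ho [Hin Hinc]]]].
    pose proof (ordered_le _ _ _ Ho).
    destruct (classic (N x)) as [Nx|Nx].
    + destruct (Gnull Nx) as [k Hk]. exists ((u, v) :: L), (S (Nat.max k K)).
      split; [constructor; auto; lra|]. split.
      * intros pq [<-|Hpq]; [exists k; simpl; split; [lia | lra]|].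
        destruct (Hin pq Hpq) as [k' Hk']. exists k'; split; [lia | tauto].
      * unfold sumabs in *; simpl.
        pose proof (Rle_abs (f v - f u)).
        assert (0 <= eps * (v - u)) by (apply Rmult_le_pos; lra).
        lra.
    + exists L, K. split; [apply (ordered_weak v); auto; lra|]. split; auto.
      specialize (Gok Nx). lra.
Qed.

Lemma ac_increment_small f a b N eps :
  a <= b -> abs_cont_on f a b -> negligible N -> 0 < eps ->
  (forall x, a <= x <= b -> ~ N x -> exists d, derivable_pt_lim f x d /\ d <= 0) ->
  f b - f a <= eps * (b - a) + eps.
Proof.
  intros Hab Hac HN He Hd.
  destruct (Hac eps He) as [dl [Hdl HAC]].
  destruct (HN (dl / 2) ltac:(lra)) as [a' [b' [Cov [Lab Sab]]]].
  destruct (cousin (fine_tag f N a' b' eps) a b Hab) as [l Hl].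
  { intros x Hx. destruct (classic (N x)) as [Nx|Nx].
    - destruct (Cov x Nx) as [k Hk].
      exists (Rmin (x - a' k) (b' k - x)); split; [apply Rmin_glb_lt; lra|].
      intros u v Huv Hvu.
      pose proof (Rmin_l (x - a' k) (b' k - x)); pose proof (Rmin_r (x - a' k) (b' k - x)).
      split; [intros _; exists k; lra | tauto].
    - destruct (Hd x Hx Nx) as [d [Dd Dle]].
      destruct (nonpos_derivative_local f x d eps Dd Dle He) as [del [Hdel Hloc]].
      exists del; split; auto. intros u v Huv Hvu. split; [tauto|]. intros _; auto. }
  destruct (fine_chain_increment f N a' b' eps a l b ltac:(lra) Hl)
    as [L [K [Ho [Hin Hinc]]]].
  pose proof (sumlen_covered a' b' K Lab a L b Ho Hin).
  specialize (Sab K).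
  assert (sumabs f L < eps) by (apply (abs_cont_ordered f a b eps dl L); auto; lra).
  lra.
Qed.

(* Letting [eps] go to [0] in [ac_increment_small]. *)
Lemma ac_nonincreasing f a b N :
  a <= b -> abs_cont_on f a b -> negligible N ->
  (forall x, a <= x <= b -> ~ N x -> exists d, derivable_pt_lim f x d /\ d <= 0) ->
  f b <= f a.
Proof.
  intros Hab Hac HN Hd. apply Rnot_lt_le; intros Hlt.
  set (eps := (f b - f a) / (2 * (b - a + 1))).
  assert (He : 0 < eps) by (unfold eps; apply Rdiv_lt_0_compat; lra).
  pose proof (ac_increment_small f a b N eps Hab Hac HN He Hd).
  assert (eps * (b - a) + eps = (f b - f a) / 2) by (unfold eps; field; lra).
  lra.
Qed.

(** Pointwise Lyapunov estimates for the closed-loop error dynamics. *)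

Lemma znorm_sq a b : znorm a b * znorm a b = a * a + b * b /\ 0 <= znorm a b.
Proof. unfold znorm. split; [rewrite sqrt_sqrt; [ring | nra] | apply sqrt_pos]. Qed.

Lemma SGN_mul x sigma : SGN x sigma -> sigma * x = Rabs x.
Proof.
  intros [[Hx ->]|[[Hx ->]|[-> _]]];
    [rewrite Rabs_right | rewrite Rabs_left | rewrite Rabs_R0]; lra.
Qed.

Lemma quad_form_bounds cm cM m a b :
  cm <= m <= cM ->
  Rmin (/ 2) (cm / 2) * (a * a + b * b) <= / 2 * (a * a) + / 2 * (m * (b * b))
  <= Rmax (/ 2) (cM / 2) * (a * a + b * b).
Proof.
  intros Hm.
  pose proof (Rmin_l (/ 2) (cm / 2)); pose proof (Rmin_r (/ 2) (cm / 2)).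
  pose proof (Rmax_l (/ 2) (cM / 2)); pose proof (Rmax_r (/ 2) (cM / 2)).
  pose proof (Rle_0_sqr a); pose proof (Rle_0_sqr b); unfold Rsqr in *. nra.
Qed.

Lemma input_gain_bound eps cOm1 B Om :
  0 < eps -> 0 < cOm1 -> - B > eps -> cOm1 <= Om -> B * Om <= - (eps * cOm1).
Proof. intros; assert (eps * cOm1 <= (- B) * Om) by (apply Rmult_le_compat; lra); lra. Qed.

Section Dissipation.

Variables alpha eps cOm1 c1 c2 c3 k1 k2 k3 k4 gamma : R.
Hypotheses (Heps : 0 < eps) (HcOm1 : 0 < cOm1) (Hk1 : 0 < k1)
  (G2 : k2 >= c1 / (eps * cOm1)) (G3 : k3 >= c2 / (eps * cOm1)) (G4 : k4 >= c3 / (eps * cOm1))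
  (Hgamma_a : gamma <= alpha - / 2) (Hgamma_k : gamma <= eps * cOm1 * k1 - / 2).

Lemma gain_dominates n : 0 <= n ->
  c1 + c2 * n + c3 * n ^ 2 <= eps * cOm1 * (k2 + k3 * n + k4 * n ^ 2).
Proof.
  intros Hn. set (P := eps * cOm1) in *.
  assert (HP : 0 < P) by (unfold P; nra).
  assert (c1 <= P * k2) by (assert (c1 / P * P = c1) by (field; lra); nra).
  assert (c2 <= P * k3) by (assert (c2 / P * P = c2) by (field; lra); nra).
  assert (c3 <= P * k4) by (assert (c3 / P * P = c3) by (field; lra); nra).
  assert (c2 * n <= P * k3 * n) by (apply Rmult_le_compat_r; lra).
  assert (c3 * n ^ 2 <= P * k4 * n ^ 2) by (apply Rmult_le_compat_r; nra).
  nra.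
Qed.

(* Robust control: the uncertain term [chi] is cancelled by the sign feedback,
   leaving the dissipation [- eps cOm1 k1 e2^2]. *)
Lemma control_dissipation n e2 chi BOm sigma :
  0 <= n -> BOm <= - (eps * cOm1) -> SGN e2 sigma ->
  Rabs chi <= c1 + c2 * n + c3 * n ^ 2 ->
  e2 * (chi + BOm * (k1 * e2 + (k2 + k3 * n + k4 * n ^ 2) * sigma))
  <= - (eps * cOm1 * k1) * (e2 * e2).
Proof.
  intros Hn HB Hsg Hchi.
  pose proof (gain_dominates n Hn) as Hdom.
  set (Kn := k2 + k3 * n + k4 * n ^ 2) in *. set (P := eps * cOm1) in *.
  assert (HP : 0 < P) by (apply Rmult_lt_0_compat; auto).
  assert (HKn : 0 <= P * Kn) by (pose proof (Rabs_pos chi); lra).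
  assert (HKn' : 0 <= Kn) by nra.
  assert (Hchi2 : e2 * chi <= Rabs e2 * (P * Kn)).
  { eapply Rle_trans; [apply Rle_abs|]. rewrite Rabs_mult.
    apply Rmult_le_compat_l; [apply Rabs_pos | lra]. }
  assert (Hsign : BOm * Kn * Rabs e2 <= - (P * Kn) * Rabs e2).
  { apply Rmult_le_compat_r; [apply Rabs_pos | nra]. }
  assert (Hlin : BOm * k1 * (e2 * e2) <= - P * k1 * (e2 * e2)).
  { apply Rmult_le_compat_r; [nra|]. apply Rmult_le_compat_r; lra. }
  replace (e2 * (chi + BOm * (k1 * e2 + Kn * sigma)))
    with (e2 * chi + BOm * k1 * (e2 * e2) + BOm * Kn * (sigma * e2)) by ring.
  rewrite (SGN_mul e2 sigma Hsg). lra.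
Qed.

(* Derivative of [V = 1/2 e1^2 + 1/2 M e2^2] along the closed loop, using the
   skew-symmetry [1/2 dM = V_cor]: [dV <= - gamma (e1^2 + e2^2)]. *)
Lemma lyapunov_rate e1 e2 m dm v chi BOm de2 sigma :
  / 2 * dm - v = 0 -> BOm <= - (eps * cOm1) -> SGN e2 sigma ->
  Rabs chi <= c1 + c2 * znorm e1 e2 + c3 * znorm e1 e2 ^ 2 ->
  m * de2 = chi - v * e2 + BOm * (k1 * e2 + (k2 + k3 * znorm e1 e2 + k4 * znorm e1 e2 ^ 2) * sigma) ->
  e1 * (e2 - alpha * e1) + / 2 * dm * (e2 * e2) + m * e2 * de2 <= - gamma * (e1 * e1 + e2 * e2).
Proof.
  intros Hsk HB Hsg Hchi Hde2.
  destruct (znorm_sq e1 e2) as [_ Hn].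
  pose proof (control_dissipation (znorm e1 e2) e2 chi BOm sigma Hn HB Hsg Hchi) as Hctl.
  replace (m * e2 * de2) with (e2 * (m * de2)) by ring. rewrite Hde2.
  assert (Hcross : e1 * e2 <= / 2 * (e1 * e1) + / 2 * (e2 * e2))
    by (pose proof (Rle_0_sqr (e1 - e2)); unfold Rsqr in *; nra).
  assert ((alpha - / 2 - gamma) * (e1 * e1) >= 0) by nra.
  assert ((eps * cOm1 * k1 - / 2 - gamma) * (e2 * e2) >= 0) by nra.
  replace (/ 2 * dm) with v by lra. nra.
Qed.

End Dissipation.

Lemma weighted_rate_nonpos gamma l2 Vx dV s :
  0 <= gamma -> 0 < l2 -> Vx <= l2 * s -> dV <= - gamma * s ->
  gamma / l2 * Vx + dV <= 0.
Proof.
  intros Hg Hl HV HdV.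
  assert (gamma / l2 * Vx <= gamma / l2 * (l2 * s))
    by (apply Rmult_le_compat_l; [apply Rle_mult_inv_pos|]; lra).
  replace (gamma / l2 * (l2 * s)) with (gamma * s) in * by (field; lra).
  lra.
Qed.

Lemma closed_loop_weighted_rate alpha eps cm cM cOm1 c1 c2 c3 k1 k2 k3 k4
    e1 e2 m dm v chi BOm de2 sigma :
  0 < eps -> 0 < cOm1 -> 0 < k1 ->
  alpha > / 2 -> k1 > / (2 * eps * cOm1) -> k2 >= c1 / (eps * cOm1) ->
  k3 >= c2 / (eps * cOm1) -> k4 >= c3 / (eps * cOm1) ->
  cm <= m <= cM -> / 2 * dm - v = 0 -> BOm <= - (eps * cOm1) -> SGN e2 sigma ->
  Rabs chi <= c1 + c2 * znorm e1 e2 + c3 * znorm e1 e2 ^ 2 ->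
  m * de2 = chi - v * e2 + BOm * (k1 * e2 + (k2 + k3 * znorm e1 e2 + k4 * znorm e1 e2 ^ 2) * sigma) ->
  Rmin (alpha - / 2) (eps * cOm1 * k1 - / 2) / Rmax (/ 2) (cM / 2)
    * (/ 2 * (e1 * e1) + / 2 * (m * (e2 * e2)))
  + (e1 * (e2 - alpha * e1) + / 2 * dm * (e2 * e2) + m * e2 * de2) <= 0.
Proof.
  intros Heps HcOm1 Hk1 Ga G1 G2 G3 G4 Hm Hsk HB Hsg Hchi Hde2.
  assert (Hk1P : eps * cOm1 * k1 > / 2).
  { assert (/ (2 * eps * cOm1) * (eps * cOm1) = / 2) by (field; lra).
    assert (0 < eps * cOm1) by (apply Rmult_lt_0_compat; auto). nra. }
  apply weighted_rate_nonpos with (s := e1 * e1 + e2 * e2).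
  - unfold Rmin; destruct Rle_dec; lra.
  - pose proof (Rmax_l (/ 2) (cM / 2)); lra.
  - apply (quad_form_bounds cm cM), Hm.
  - apply (lyapunov_rate alpha eps cOm1 c1 c2 c3 k1 k2 k3 k4 _ Heps HcOm1 Hk1
             G2 G3 G4 (Rmin_l _ _) (Rmin_r _ _) _ _ _ _ v chi BOm de2 sigma); auto.
Qed.

Definition lyap (M e1 e2 : R -> R) (t : R) : R :=
  / 2 * (e1 t * e1 t) + / 2 * (M t * (e2 t * e2 t)).

Lemma weighted_lyap_ac c M e1 e2 a b :
  a <= b -> abs_cont_on M a b -> abs_cont_on e1 a b -> abs_cont_on e2 a b ->
  abs_cont_on (fun t => exp (c * t) * lyap M e1 e2 t) a b.
Proof.
  intros Hab HM H1 H2. unfold lyap.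
  apply ac_mult; [exact Hab | apply ac_exp_lin|].
  apply ac_plus; apply ac_scal; repeat apply ac_mult; auto.
Qed.

Lemma weighted_lyap_derivative c M e1 e2 x de1 de2 dM :
  derivable_pt_lim e1 x de1 -> derivable_pt_lim e2 x de2 -> derivable_pt_lim M x dM ->
  derivable_pt_lim (fun t => exp (c * t) * lyap M e1 e2 t) x
    (exp (c * x) * (c * lyap M e1 e2 x
                    + (e1 x * de1 + / 2 * dM * (e2 x * e2 x) + M x * e2 x * de2))).
Proof.
  intros D1 D2 DM.
  pose proof (derivable_pt_lim_mult _ _ x _ _ D1 D1) as D11.
  pose proof (derivable_pt_lim_mult _ _ x _ _ D2 D2) as D22.
  pose proof (derivable_pt_lim_mult _ _ x _ _ DM D22) as DM22.
  pose proof (derivable_pt_lim_plus _ _ x _ _ (derivable_pt_lim_scal _ (/ 2) x _ D11)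
                (derivable_pt_lim_scal _ (/ 2) x _ DM22)) as DV.
  pose proof (derivable_pt_lim_mult _ _ x _ _ (derivable_pt_lim_exp_lin c x) DV) as DW.
  match type of DW with derivable_pt_lim _ _ ?l =>
    assert (E : l = exp (c * x) * (c * lyap M e1 e2 x
                     + (e1 x * de1 + / 2 * dM * (e2 x * e2 x) + M x * e2 x * de2))) end.
  { unfold lyap, mult_fct, mult_real_fct, plus_fct. field. }
  rewrite <- E; exact DW.
Qed.

Lemma decay_from_weighted l1 l2 gamma V0 Vt n0 n t0 t :
  0 < l1 -> 0 < l2 -> 0 <= n -> 0 <= n0 ->
  l1 * (n * n) <= Vt -> V0 <= l2 * (n0 * n0) ->
  exp (gamma / l2 * t) * Vt <= exp (gamma / l2 * t0) * V0 ->
  n <= sqrt (l2 / l1) * n0 * exp (- (gamma / (2 * l2)) * (t - t0)).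
Proof.
  intros Hl1 Hl2 Hn Hn0 HVt HV0 Hmono.
  set (y := - (gamma / (2 * l2)) * (t - t0)).
  assert (HE : exp (gamma / l2 * t0) = exp (gamma / l2 * t) * (exp y * exp y)).
  { rewrite <- !exp_plus. f_equal. unfold y. field. lra. }
  assert (Hey : 0 < exp y) by apply exp_pos.
  rewrite HE in Hmono.
  assert (Vt <= exp y * exp y * V0).
  { apply (Rmult_le_reg_l (exp (gamma / l2 * t))); [apply exp_pos | lra]. }
  set (s := sqrt (l2 / l1)).
  assert (Hs : s * s = l2 / l1) by (apply sqrt_sqrt; apply Rle_mult_inv_pos; lra).
  assert (Hs0 : 0 <= s) by apply sqrt_pos.
  assert (Hsq : n * n <= (s * n0 * exp y) * (s * n0 * exp y)).
  { replace ((s * n0 * exp y) * (s * n0 * exp y)) with (l2 / l1 * (n0 * n0) * (exp y * exp y))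
      by (rewrite <- Hs; ring).
    apply (Rmult_le_reg_l l1); [lra|].
    replace (l1 * (l2 / l1 * (n0 * n0) * (exp y * exp y)))
      with (exp y * exp y * (l2 * (n0 * n0))) by (field; lra).
    assert (exp y * exp y * V0 <= exp y * exp y * (l2 * (n0 * n0)))
      by (apply Rmult_le_compat_l; nra).
    lra. }
  assert (0 <= s * n0 * exp y) by (apply Rmult_le_pos; [apply Rmult_le_pos|]; lra).
  apply Rsqr_incr_0_var; unfold Rsqr; auto.
Qed.

Lemma active_leg_gain eps cOm1 (BR BL : R -> R) OmR OmL th m de2 rhs u :
  0 < eps -> 0 < cOm1 -> cOm1 <= OmR -> cOm1 <= OmL ->
  (Qreg BR eps th /\ m * de2 = rhs + BR th * OmR * u) \/
  (Qreg BL eps th /\ m * de2 = rhs + BL th * OmL * u) ->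
  exists BOm, BOm <= - (eps * cOm1) /\ m * de2 = rhs + BOm * u.
Proof.
  intros He Hc HR HL [[Hq Heq]|[Hq Heq]];
    eexists; (split; [|exact Heq]); apply input_gain_bound; auto.
Qed.

Theorem theorem1
  (alpha eps cm cM cOm1 cOm2 c1 c2 c3 k1 k2 k3 k4 t0 t1 : R)
  (q qd e1 e2 M V chi BR BL OmR OmL : R -> R)
  (Halpha : 0 < alpha) (Heps : 0 < eps)
  (Hcm : 0 < cm) (HcM : 0 < cM) (HcOm1 : 0 < cOm1) (HcOm2 : 0 < cOm2)
  (Hc1 : 0 < c1) (Hc2 : 0 < c2) (Hc3 : 0 < c3)
  (Hk1 : 0 < k1) (Hk2 : 0 < k2) (Hk3 : 0 < k3) (Hk4 : 0 < k4)
  (* standing assumptions *)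
  (HM : forall t, cm <= M t <= cM)
  (HOm : forall t, (cOm1 <= OmR t <= cOm2) /\ (cOm1 <= OmL t <= cOm2))
  (Hdisj : forall th, ~ (Qreg BR eps th /\ Qreg BL eps th))
  (HMac : forall T, t0 <= T < t1 -> abs_cont_on M t0 T)
  (Hskew : ae_on (fun t => t0 < t < t1)
             (fun t => exists dM, derivable_pt_lim M t dM /\ / 2 * dM - V t = 0))
  (Hchi : forall t, Rabs (chi t) <= c1 + c2 * znorm (e1 t) (e2 t)
                                     + c3 * (znorm (e1 t) (e2 t)) ^ 2)
  (* errors *)
  (He1 : forall t, e1 t = qd t - q t)
  (* the n-th controlled interval (t_n^on, t_n^off) *)
  (Ht : t0 < t1)
  (Hreg : forall t, t0 < t < t1 -> Qreg BR eps (q t) \/ Qreg BL eps (q t))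
  (Hsol : closed_loop_filippov_sol alpha eps k1 k2 k3 k4
            M V chi BR BL OmR OmL q e1 e2 t0 t1)
  (* gain conditions *)
  (Ga : alpha > / 2)
  (G1 : k1 > / (2 * eps * cOm1))
  (G2 : k2 >= c1 / (eps * cOm1))
  (G3 : k3 >= c2 / (eps * cOm1))
  (G4 : k4 >= c3 / (eps * cOm1)) :
  let gamma1 := Rmin (alpha - / 2) (eps * cOm1 * k1 - / 2) in
  let lambda1 := Rmin (/ 2) (cm / 2) in
  let lambda2 := Rmax (/ 2) (cM / 2) in
  forall t, t0 < t < t1 ->
    znorm (e1 t) (e2 t) <=
      sqrt (lambda2 / lambda1) * znorm (e1 t0) (e2 t0)
        * exp (- (gamma1 / (2 * lambda2)) * (t - t0)).
Proof.
  intros gamma1 lambda1 lambda2 t Htt.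
  assert (Hl1 : 0 < lambda1) by (unfold lambda1, Rmin; destruct Rle_dec; lra).
  assert (Hl2 : 0 < lambda2) by (unfold lambda2; pose proof (Rmax_l (/ 2) (cM / 2)); lra).
  set (W := fun s => exp (gamma1 / lambda2 * s) * lyap M e1 e2 s).
  destruct Hsol as [Hac [N1 [HN1 Hdyn]]]; destruct Hskew as [N2 [HN2 Hsk]].
  (* [W] is nonincreasing on [[t0, t]]: off a null set its derivative is [<= 0]. *)
  assert (Hdecr : W t <= W t0).
  { destruct (Hac t ltac:(lra)) as [Ac1 Ac2].
    apply (ac_nonincreasing W t0 t (fun x => (N1 x \/ N2 x) \/ (x = t0 \/ x = t))).
    - lra.
    - apply weighted_lyap_ac; auto; [lra | apply HMac; lra].
    - repeat apply negligible_union; auto using negligible_point.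
    - intros x Hx Nx. assert (Hx1 : t0 < x < t1) by (split; destruct Hx; [|lra]; lra).
      destruct (Hdyn x Hx1 ltac:(tauto)) as [D1 [de2 [sigma [D2 [Hsg Hleg]]]]].
      destruct (Hsk x Hx1 ltac:(tauto)) as [dM [DM Hskx]].
      destruct (HOm x) as [HOR HOL].
      destruct (active_leg_gain eps cOm1 BR BL (OmR x) (OmL x) (q x) _ _ _ _ Heps HcOm1
                  ltac:(lra) ltac:(lra) Hleg) as [BOm [HBOm Heq]].
      eexists; split; [apply weighted_lyap_derivative; eauto|].
      rewrite <- (Rmult_0_r (exp (gamma1 / lambda2 * x))).
      apply Rmult_le_compat_l; [left; apply exp_pos|].
      apply (closed_loop_weighted_rate alpha eps cm cM cOm1 c1 c2 c3 k1 k2 k3 k4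
               _ _ _ _ (V x) (chi x) BOm de2 sigma); auto. }
  destruct (znorm_sq (e1 t) (e2 t)) as [Hn Hn0].
  destruct (znorm_sq (e1 t0) (e2 t0)) as [Hm Hm0].
  apply (decay_from_weighted lambda1 lambda2 gamma1 (lyap M e1 e2 t0) (lyap M e1 e2 t));
    auto; unfold lyap; [rewrite Hn | rewrite Hm]; apply (quad_form_bounds cm cM), HM.
Qed.
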